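(* Let $1\le M\le N$, let $\mathbf{H}$ be a complex $N\times M$ matrix of full column rank, and let $\mathbf{H}^{-\mathtt{H}}=\mathbf{H}(\mathbf{H}^{\mathtt{H}}\mathbf{H})^{-1}$. Let $\mathbf{B}=[\mathbf{b}_1,\dots,\mathbf{b}_M]=\mathbf{H}^{-\mathtt{H}}\mathbf{U}$, with $\mathbf{U}$ an $M\times M$ unimodular matrix over $\mathbb{Z}[i]$, be an LLL-reduced basis of the lattice generated by $\mathbf{H}^{-\mathtt{H}}$, let $\delta$ be its orthogonality defect, and write $\mathbf{B}^{-\mathtt{H}}=\mathbf{B}(\mathbf{B}^{\mathtt{H}}\mathbf{B})^{-1}=[\mathbf{a}_1,\dots,\mathbf{a}_M]$. Suppose $\mathbf{y}=\mathbf{H}\mathbf{x}+\mathbf{w}$ with $\mathbf{x}\in\mathbb{Z}[i]^M$ and $\mathbf{w}\in\mathbb{C}^N$. If $$\|\mathbf{w}\|<\frac{\min\{\|\mathbf{a}_1\|,\dots,\|\mathbf{a}_M\|\}}{2\sqrt{M\delta}},$$ then the LLL-aided (type I) decoder correctly decodes, i.e. $\widehat{\mathbf{x}}=\mathbf{x}$.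
   Context: $(\cdot)^{\mathtt{H}}$ is the conjugate transpose; $\mathbb{Z}[i]$ is the ring of Gaussian integers; a unimodular matrix is a matrix with entries in $\mathbb{Z}[i]$ whose inverse also has entries in $\mathbb{Z}[i]$. The lattice generated by an $N\times M$ matrix $\mathbf{G}$ of full column rank is $\{\mathbf{G}\mathbf{z}:\mathbf{z}\in\mathbb{Z}[i]^M\}$. The orthogonality defect of $\mathbf{B}=[\mathbf{b}_1,\dots,\mathbf{b}_M]$ is $\delta=\|\mathbf{b}_1\|^2\cdots\|\mathbf{b}_M\|^2/\det(\mathbf{B}^{\mathtt{H}}\mathbf{B})$. A basis is LLL-reduced in the sense of the Lenstra–Lenstra–Lovász reduction (extended to complex lattices over $\mathbb{Z}[i]$): with Gram–Schmidt vectors $\mathbf{b}_k^*$ and coefficients $\mu_{k,j}=\langle\mathbf{b}_k,\mathbf{b}_j^*\rangle/\|\mathbf{b}_j^*\|^2$, one has $|\mathrm{Re}\,\mu_{k,j}|,|\mathrm{Im}\,\mu_{k,j}|\le 1/2$ for $j<k$ and $\|\mathbf{b}_k^*\|^2\ge(3/4-|\mu_{k,k-1}|^2)\|\mathbf{b}_{k-1}^*\|^2$. The LLL-aided (type I) decoder computes $\tilde{\mathbf{x}}$ as the closest point of $\mathbb{Z}[i]^M$ to $\mathbf{B}^{\mathtt{H}}\mathbf{y}$ (componentwise rounding of real and imaginary parts) and outputs $\widehat{\mathbf{x}}=\mathbf{U}^{-\mathtt{H}}\tilde{\mathbf{x}}$. *)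

From HB Require Import structures.
From mathcomp Require Import all_boot all_order all_algebra.
From mathcomp Require Import reals.
From mathcomp Require Import complex.
Set Implicit Arguments. Unset Strict Implicit. Unset Printing Implicit Defensive.
Import Order.TTheory GRing.Theory Num.Theory.
Local Open Scope ring_scope.
Local Open Scope complex_scope.

Section Defs.
Variable R : realType.
Local Notation C := R[i].

Definition gaussian (z : C) : bool :=
  ((complex.Re z : R) \is a Num.int) && ((complex.Im z : R) \is a Num.int).
Definition gauss_mx m n (A : 'M[C]_(m, n)) : Prop :=
  forall i j, gaussian (A i j).

Definition ctmx m n (A : 'M[C]_(m, n)) : 'M[C]_(n, m) := (map_mx (@conjc R) A)^T.

Definition unimodular n (U : 'M[C]_n) : Prop :=
  gauss_mx U /\ U \in unitmx /\ gauss_mx (invmx U).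

Definition pinvH m n (A : 'M[C]_(m, n)) : 'M[C]_(m, n) := A *m invmx (ctmx A *m A).

Definition cdot n (u v : 'cV[C]_n) : C := \sum_i u i 0 * (v i 0)^*.
Definition sqnorm n (v : 'cV[C]_n) : R := \sum_i (complex.Re (v i 0) ^+ 2 + complex.Im (v i 0) ^+ 2).
Definition vnorm n (v : 'cV[C]_n) : R := Num.sqrt (sqnorm v).

Definition gs_step n (acc : seq 'cV[C]_n) (b : 'cV[C]_n) : seq 'cV[C]_n :=
  rcons acc (b - \sum_(v <- acc) (cdot b v / cdot v v) *: v).
Definition gram_schmidt n (bs : seq 'cV[C]_n) : seq 'cV[C]_n := foldl (@gs_step n) [::] bs.

Definition gs_vec n m (B : 'M[C]_(n, m)) (k : nat) : 'cV[C]_n :=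
  nth 0 (gram_schmidt [seq col j B | j <- enum 'I_m]) k.

Definition gs_mu n m (B : 'M[C]_(n, m)) (k j : 'I_m) : C :=
  cdot (col k B) (gs_vec B j) / cdot (gs_vec B j) (gs_vec B j).

Definition cabs2 (z : C) : R := complex.Re z ^+ 2 + complex.Im z ^+ 2.

Definition LLL_reduced n m (B : 'M[C]_(n, m)) : Prop :=
  (forall k j : 'I_m, (j < k)%N ->
      `|complex.Re (gs_mu B k j)| <= 1/2 /\ `|complex.Im (gs_mu B k j)| <= 1/2) /\
  (forall (k j : 'I_m), nat_of_ord k = j.+1 ->
      sqnorm (gs_vec B k) >= (3/4 - cabs2 (gs_mu B k j)) * sqnorm (gs_vec B j)).

(* orthogonality defect ||b_1||^2...||b_M||^2 / det(B^H B); the determinant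
   of the Gram matrix is real (positive), we take its real part. *)
Definition orth_defect n m (B : 'M[C]_(n, m)) : R :=
  (\prod_(j < m) sqnorm (col j B)) / complex.Re (\det (ctmx B *m B)).

Definition round_r (x : R) : R := (Num.floor (x + 1/2))%:~R.
Definition round_c (z : C) : C := round_r (complex.Re z) +i* round_r (complex.Im z).

Definition lll_decode n m (B : 'M[C]_(n, m)) (U : 'M[C]_m) (y : 'cV[C]_n) : 'cV[C]_m :=
  invmx (ctmx U) *m \col_i round_c ((ctmx B *m y) i 0).

Definition min_col_norm n m (A : 'M[C]_(n, m)) : R :=
  let s := [seq vnorm (col j A) | j <- enum 'I_m] in
  \big[Num.min/head 0 s]_(v <- s) v.

End Defs.

(* Write B^H y = U^H x + B^H w.  The vector U^H x has Gaussian integer entries,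
   so componentwise rounding returns it as soon as |<w, b_k>|^2 < 1/4 for every k,
   and U^{-H} then recovers x.  By Cauchy-Schwarz |<w, b_k>|^2 <= |b_k|^2 |w|^2.
   Since |a_k|^2 = ((B^H B)^{-1})_kk is the ratio of the Gram determinant of the
   other columns to det (B^H B), Hadamard's inequality gives
   |b_k|^2 |a_k|^2 <= delta, and the noise bound yields
   |b_k|^2 |w|^2 < |b_k|^2 |a_k|^2 / (4 M delta) <= 1/4. *)

From HB Require Import structures.
From mathcomp Require Import all_boot all_order all_algebra.
From mathcomp Require Import reals complex.
From mathcomp Require Import ring lra.
Set Implicit Arguments.
Unset Strict Implicit.
Unset Printing Implicit Defensive.
Import Order.TTheory GRing.Theory Num.Theory.
Local Open Scope complex_scope.
Local Open Scope ring_scope.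

Section LLLDecoding.
Variable R : realType.
Local Notation C := R[i].
Local Notation gram A := (ctmx A *m A).

Lemma ctmxE m n (A : 'M[C]_(m, n)) i j : ctmx A i j = (A j i)^*.
Proof. by rewrite !mxE. Qed.

Lemma ctmx_mul m n p (A : 'M[C]_(m, n)) (B : 'M[C]_(n, p)) :
  ctmx (A *m B) = ctmx B *m ctmx A.
Proof. by rewrite /ctmx map_mxM trmx_mul. Qed.

Lemma ctmxK m n (A : 'M[C]_(m, n)) : ctmx (ctmx A) = A.
Proof. by apply/matrixP=> i j; rewrite !mxE conjcK. Qed.

Lemma ctmx0 m n : ctmx (0 : 'M[C]_(m, n)) = 0.
Proof. by rewrite /ctmx map_mx0 trmx0. Qed.

Lemma ctmxB m n (A B : 'M[C]_(m, n)) : ctmx (A - B) = ctmx A - ctmx B.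
Proof. by apply/matrixP=> i j; rewrite !mxE rmorphB. Qed.

Lemma ctmxZ m n a (A : 'M[C]_(m, n)) : ctmx (a *: A) = a^* *: ctmx A.
Proof. by apply/matrixP=> i j; rewrite !mxE rmorphM. Qed.

Lemma ctmx_row_mx m n1 n2 (A : 'M[C]_(m, n1)) (B : 'M[C]_(m, n2)) :
  ctmx (row_mx A B) = col_mx (ctmx A) (ctmx B).
Proof. by rewrite /ctmx map_row_mx tr_row_mx. Qed.

Lemma ctmx_inv n (A : 'M[C]_n) : ctmx (invmx A) = invmx (ctmx A).
Proof. by rewrite /ctmx map_invmx trmx_inv. Qed.

Lemma ctmx_unitmx n (A : 'M[C]_n) : (ctmx A \in unitmx) = (A \in unitmx).
Proof. by rewrite !unitmxE /ctmx det_tr det_map_mx !unitfE conjc_eq0. Qed.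

Lemma mulJc (z : C) : z^* * z = (cabs2 z)%:C.
Proof. by case: z => a b; rewrite /cabs2 /=; congr Complex; ring. Qed.

Lemma cabs2_ge0 (z : C) : 0 <= cabs2 z.
Proof. by rewrite addr_ge0 // sqr_ge0. Qed.

Lemma sqnorm_ge0 n (v : 'cV[C]_n) : 0 <= sqnorm v.
Proof. by apply: sumr_ge0 => i _; apply: cabs2_ge0. Qed.

Lemma gram_colE m n (B : 'M[C]_(m, n)) j k :
  gram B j k = (ctmx (col j B) *m col k B) 0 0.
Proof. by rewrite !mxE; apply: eq_bigr => i _; rewrite !mxE. Qed.

Lemma sqnormE n (v : 'cV[C]_n) : (sqnorm v)%:C = gram v 0 0.
Proof.
rewrite mxE rmorph_sum; apply: eq_bigr => i _.
by rewrite ctmxE mulJc.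
Qed.

Lemma gram_diag m n (B : 'M[C]_(m, n)) j : gram B j j = (sqnorm (col j B))%:C.
Proof. by rewrite gram_colE sqnormE. Qed.

Lemma gram_diag_ge0 m n (B : 'M[C]_(m, n)) j : 0 <= gram B j j.
Proof. by rewrite gram_diag ler0c sqnorm_ge0. Qed.

Lemma gram_eq0 n (v : 'cV[C]_n) : gram v 0 0 = 0 -> v = 0.
Proof.
have ge0 k : 0 <= ctmx v 0 k * v k 0 by rewrite ctmxE mulJc ler0c cabs2_ge0.
rewrite mxE => /psumr_eq0P v0; apply/matrixP => i j; rewrite (ord1 j) mxE.
have /eqP := v0 (fun k _ => ge0 k) i isT.
by rewrite ctmxE mulf_eq0 conjc_eq0 orbb => /eqP.
Qed.

(* Projects the columns of B onto the orthogonal complement of b, so that its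
   Gram matrix is the Schur complement of gram b in gram (row_mx b B). *)
Definition orth_compl N n (b : 'cV[C]_N) (B : 'M[C]_(N, n)) : 'M[C]_(N, n) :=
  B - (gram b 0 0)^-1 *: (b *m (ctmx b *m B)).

Lemma gram_orth_compl N n (b : 'cV[C]_N) (B : 'M[C]_(N, n)) : gram b 0 0 != 0 ->
  gram (orth_compl b B) = gram B - (gram b 0 0)^-1 *: (ctmx B *m b *m (ctmx b *m B)).
Proof.
set a := gram b 0 0 => a0.
have Ja : (a^-1)^* = a^-1 by rewrite geC0_conj // invr_ge0 gram_diag_ge0.
have ba : gram b = a%:M by rewrite {1}[gram b]mx11_scalar.
rewrite /orth_compl -/a ctmxB ctmxZ !ctmx_mul ctmxK Ja.
rewrite mulmxBl !mulmxBr -!scalemxAl -!scalemxAr !scalerA !mulmxA.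
rewrite -[ctmx B *m b *m ctmx b *m b]mulmxA ba mul_mx_scalar -!scalemxAl scalerA.
by rewrite -mulrA mulVf // mulr1 subrr subr0.
Qed.

Lemma gram_orth_compl_diag N n (b : 'cV[C]_N) (B : 'M[C]_(N, n)) j :
  gram b 0 0 != 0 ->
  gram (orth_compl b B) j j = gram B j j - (gram b 0 0)^-1 * (cabs2 ((ctmx b *m B) 0 j))%:C.
Proof.
move=> a0; rewrite gram_orth_compl // mxE [X in _ + X]mxE [X in _ - X]mxE.
by congr (_ - _ * _); rewrite mxE big_ord1 -[ctmx B *m b]ctmxK ctmx_mul ctmxK ctmxE mulJc.
Qed.

Lemma gram_orth_compl_diag_le N n (b : 'cV[C]_N) (B : 'M[C]_(N, n)) j :
  gram b 0 0 != 0 -> gram (orth_compl b B) j j <= gram B j j.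
Proof.
move=> a0; rewrite gram_orth_compl_diag // gerDl oppr_le0.
by rewrite mulr_ge0 ?invr_ge0 ?gram_diag_ge0 ?ler0c ?cabs2_ge0.
Qed.

Lemma det_gram_row_mx N n (b : 'cV[C]_N) (B : 'M[C]_(N, n)) : gram b 0 0 != 0 ->
  \det (gram (row_mx b B)) = gram b 0 0 * \det (gram (orth_compl b B)).
Proof.
set a := gram b 0 0 => a0.
pose L : 'M[C]_(1 + n) := block_mx 1%:M 0 (- a^-1 *: (ctmx B *m b)) 1%:M.
have detL : \det L = 1 by rewrite det_lblock !det1 mulr1.
have ba : gram b = a%:M by rewrite {1}[gram b]mx11_scalar.
rewrite -[LHS]mul1r -detL -det_mulmx ctmx_row_mx mul_col_row mulmx_block.
rewrite !mul1mx !mul0mx !addr0 ba mul_mx_scalar scalerA mulrN mulfV //.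
rewrite scaleN1r addNr -scalemxAl scaleNr addrC -gram_orth_compl //.
by rewrite det_ublock det_scalar1.
Qed.

Lemma hadamard_gram n N (B : 'M[C]_(N, n)) :
  0 <= \det (gram B) <= \prod_j gram B j j.
Proof.
elim: n N B => [|n IH] N B; first by rewrite det_mx00 big_ord0 lexx ler01.
rewrite -(hsubmxK (B : 'M_(N, 1 + n))).
move: (lsubmx _) (rsubmx _) => b {}B; rewrite -[n.+1]/(1 + n)%N.
have diag0 : gram (row_mx b B) ord0 ord0 = gram b 0 0.
  rewrite [LHS]gram_colE [RHS]gram_colE (_ : ord0 = lshift n (0 : 'I_1)) ?colKl //.
  exact: val_inj.
have diagS j : gram (row_mx b B) (lift ord0 j) (lift ord0 j) = gram B j j.
  rewrite [LHS]gram_colE (_ : lift ord0 j = rshift 1 j) ?colKr -?gram_colE //.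
  exact: val_inj.
rewrite big_ord_recl diag0; under eq_bigr do rewrite diagS.
have [b0|a0] := eqVneq (gram b 0 0) 0.
  rewrite b0 mul0r (gram_eq0 b0) ctmx_row_mx ctmx0 mul_col_row !mul0mx mulmx0.
  by rewrite det_ublock det_mx11 mxE mul0r lexx.
have a_ge0 := gram_diag_ge0 b 0.
have [P0 PB] := andP (IH _ (orth_compl b B)).
rewrite det_gram_row_mx // mulr_ge0 //=; apply: ler_wpM2l => //.
apply: le_trans PB _; apply: ler_prod => j _.
by rewrite gram_diag_ge0 gram_orth_compl_diag_le.
Qed.

Lemma cauchy_schwarz N (v w : 'cV[C]_N) :
  cabs2 ((ctmx v *m w) 0 0) <= sqnorm v * sqnorm w.
Proof.
have [v0|a0] := eqVneq (gram v 0 0) 0.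
  rewrite (gram_eq0 v0) ctmx0 mul0mx mxE /cabs2 /= expr0n /= addr0.
  by rewrite mulr_ge0 ?sqnorm_ge0.
have sv : 0 < sqnorm v.
  by rewrite lt_def sqnorm_ge0 andbT; apply: contra a0 => /eqP s0; rewrite -sqnormE s0.
have := gram_diag_ge0 (orth_compl v w) 0.
rewrite gram_orth_compl_diag // -!sqnormE -fmorphV -rmorphM -rmorphB ler0c subr_ge0.
by rewrite -(ler_pM2l sv) mulrA mulfV ?gt_eqF // mul1r.
Qed.

Lemma gram_unitmx N M (H : 'M[C]_(N, M)) : \rank H = M -> gram H \in unitmx.
Proof.
move=> rkH; rewrite unitmxE unitfE; apply/negP => /det0P [v v_neq0 vG0].
have /row_fullP [X XH] : row_full H by rewrite /row_full rkH.
have Hv0 : H *m ctmx v = 0.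
  by apply: gram_eq0; rewrite !ctmx_mul ctmxK mulmxA -(mulmxA v) vG0 !mul0mx mxE.
move: v_neq0; rewrite -[v]ctmxK -[ctmx v]mul1mx -XH -mulmxA Hv0 mulmx0.
by rewrite ctmx0 eqxx.
Qed.

Lemma gram_pinvH N M (B : 'M[C]_(N, M)) : gram B \in unitmx ->
  gram (pinvH B) = invmx (gram B).
Proof.
move=> Gu; have GH : ctmx (gram B) = gram B by rewrite ctmx_mul ctmxK.
by rewrite /pinvH ctmx_mul ctmx_inv GH !mulmxA -(mulmxA _ (ctmx B)) mulVmx ?mul1mx.
Qed.

Lemma invmx_gram_diag N M (B : 'M[C]_(N, M)) k : gram B \in unitmx ->
  invmx (gram B) k k = (\det (gram B))^-1 * \det (gram (col' k B)).
Proof.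
move=> Gu; rewrite /invmx Gu !mxE /cofactor -signr_odd addnn odd_double mul1r.
congr (_ * \det _); apply/matrixP => i j; rewrite !mxE.
by apply: eq_bigr => l _; rewrite !mxE.
Qed.

Lemma sqnorm_col_pinvH_le N M (B : 'M[C]_(N, M)) k : gram B \in unitmx ->
  sqnorm (col k B) * sqnorm (col k (pinvH B)) <= orth_defect B.
Proof.
move=> Gu; set G := gram B.
have detG_gt0 : 0 < \det G.
  by rewrite lt_def -unitfE -unitmxE Gu; case/andP: (hadamard_gram B).
have diag_minor j : gram (col' k B) j j = G (lift k j) (lift k j).
  by rewrite [LHS]gram_colE col'Esub col_colsub -gram_colE.
have /andP [_ minor_le] := hadamard_gram (col' k B).
rewrite -lecR rmorphM /= -!gram_diag gram_pinvH // invmx_gram_diag //.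
have detG_real : (complex.Re (\det G))%:C = \det G by rewrite RRe_real // ger0_real // ltW.
rewrite /orth_defect rmorphM /= rmorph_prod fmorphV /= detG_real.
under [X in _ <= X * _]eq_bigr do rewrite -gram_diag.
rewrite (bigD1_ord k) //= mulrCA mulrC; apply: ler_wpM2r; first by rewrite invr_ge0 ltW.
apply: ler_wpM2l; first exact: gram_diag_ge0.
by apply: le_trans minor_le _; under eq_bigr do rewrite diag_minor.
Qed.

Lemma gaussianD (y z : C) : gaussian y -> gaussian z -> gaussian (y + z).
Proof.
case: y => a b; case: z => c d; rewrite /gaussian /= => /andP [? ?] /andP [? ?].
by rewrite !rpredD.
Qed.

Lemma gaussianM (y z : C) : gaussian y -> gaussian z -> gaussian (y * z).
Proof.
case: y => a b; case: z => c d; rewrite /gaussian /= => /andP [? ?] /andP [? ?].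
by rewrite ?(rpredD, rpredN, rpredM).
Qed.

Lemma gaussianJ (z : C) : gaussian z -> gaussian z^*.
Proof. by case: z => a b; rewrite /gaussian /= rpredN. Qed.

Lemma gauss_mx_ctmx m n (A : 'M[C]_(m, n)) : gauss_mx A -> gauss_mx (ctmx A).
Proof. by move=> gA i j; rewrite ctmxE gaussianJ. Qed.

Lemma gauss_mx_mul m n p (A : 'M[C]_(m, n)) (B : 'M[C]_(n, p)) :
  gauss_mx A -> gauss_mx B -> gauss_mx (A *m B).
Proof.
move=> gA gB i j; rewrite mxE; elim/big_ind: _ => [||k _]; last exact: gaussianM.
  by rewrite /gaussian /= rpred0.
exact: gaussianD.
Qed.

Lemma round_r_intD (p t : R) : p \is a Num.int -> `|t| < 1/2 -> round_r (p + t) = p.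
Proof.
move=> p_int t_small; rewrite /round_r -addrA addrC floorDrz //.
suff -> : Num.floor (t + 1/2) = 0 by rewrite add0r floorK.
by apply: floor_def; move: t_small; rewrite ltr_norml add0r /= => /andP [? ?]; lra.
Qed.

Lemma round_c_gaussianD (g e : C) : gaussian g -> cabs2 e < 1/4 -> round_c (g + e) = g.
Proof.
have half (x : R) : x ^+ 2 < 1/4 -> `|x| < 1/2.
  by move=> x2; rewrite ltr_norml; apply/andP; split; nra.
case: g => a b; case: e => c d; rewrite /gaussian /cabs2 /= => /andP [a_int b_int] e2.
by rewrite /round_c /= !round_r_intD // half //; nra.
Qed.

Lemma min_col_norm_le n m (A : 'M[C]_(n, m)) k : min_col_norm A <= vnorm (col k A).
Proof.
by apply: (ge_bigmin_seq _ (vnorm (col k A))) => //; apply: map_f; rewrite mem_enum.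
Qed.

Lemma min_col_norm_ge0 n m (A : 'M[C]_(n, m)) : 0 <= min_col_norm A.
Proof.
have col_ge0 v : v \in [seq vnorm (col j A) | j <- enum 'I_m] -> 0 <= v.
  by case/mapP => j _ ->; apply: sqrtr_ge0.
rewrite /min_col_norm big_seq; apply: le_bigmin => [|v]; last exact: col_ge0.
by case: (enum 'I_m) col_ge0 => [|j s] //= ->; rewrite ?mem_head.
Qed.

Lemma sqr_lt_of_sqrt_lt_div (s t m c : R) :
  0 <= s -> 0 <= t -> 0 <= m -> m <= Num.sqrt t ->
  Num.sqrt s < m / (2 * Num.sqrt c) -> 0 < c /\ s * (4 * c) < t.
Proof.
move=> s_ge0 t_ge0 m_ge0 m_le lt_div.
have c_gt0 : 0 < c.
  rewrite -sqrtr_gt0 lt_def sqrtr_ge0 andbT; apply: contraTneq lt_div => ->.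
  by rewrite mulr0 invr0 mulr0 -leNgt sqrtr_ge0.
have lt_m : Num.sqrt s * (2 * Num.sqrt c) < m.
  by rewrite -ltr_pdivlMr // mulr_gt0 // sqrtr_gt0.
split=> //; have four : (4 : R) = 2 ^+ 2 by rewrite expr2 -natrM.
move: (lt_le_trans lt_m m_le); rewrite -ltr_sqr ?nnegrE ?mulr_ge0 ?sqrtr_ge0 //.
by rewrite !exprMn !sqr_sqrtr // ?ltW // four.
Qed.

Lemma ctmx_pinvH_mul N M (H : 'M[C]_(N, M)) (U : 'M[C]_M) : gram H \in unitmx ->
  ctmx (pinvH H *m U) *m H = ctmx U.
Proof.
move=> GHu; have GH : ctmx (gram H) = gram H by rewrite ctmx_mul ctmxK.
by rewrite /pinvH !ctmx_mul ctmx_inv GH -!mulmxA mulVmx ?mulmx1.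
Qed.

Lemma gram_pinvH_mul_unitmx N M (H : 'M[C]_(N, M)) (U : 'M[C]_M) :
  gram H \in unitmx -> U \in unitmx -> gram (pinvH H *m U) \in unitmx.
Proof.
move=> GHu Uu; rewrite ctmx_mul mulmxA -(mulmxA _ (ctmx _)) gram_pinvH //.
by rewrite !unitmx_mul ctmx_unitmx unitmx_inv GHu Uu.
Qed.

Lemma ctmx_mul_col N M (B : 'M[C]_(N, M)) (w : 'cV[C]_N) k :
  (ctmx B *m w) k 0 = (ctmx (col k B) *m w) 0 0.
Proof. by rewrite !mxE; apply: eq_bigr => i _; rewrite !mxE. Qed.

Lemma decoder_noise_lt N M (B : 'M[C]_(N, M)) (w : 'cV[C]_N) k :
  gram B \in unitmx ->
  vnorm w < min_col_norm (pinvH B) / (2 * Num.sqrt (M%:R * orth_defect B)) ->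
  cabs2 ((ctmx B *m w) k 0) < 1/4.
Proof.
move=> GBu hw; set d := orth_defect B; set c := M%:R * d.
have [c_gt0 sw_lt] := sqr_lt_of_sqrt_lt_div (sqnorm_ge0 w) (sqnorm_ge0 _)
  (min_col_norm_ge0 _) (min_col_norm_le _ k) hw.
have M_ge1 : 1 <= M%:R :> R by rewrite ler1n (leq_ltn_trans (leq0n k) (ltn_ord k)).
have d_gt0 : 0 < d by rewrite -(pmulr_rgt0 _ (lt_le_trans ltr01 M_ge1)).
have d_le_c : d <= c by rewrite ler_peMl // ltW.
have CS := cauchy_schwarz (col k B) w; rewrite -ctmx_mul_col in CS.
have sb_sa_le := sqnorm_col_pinvH_le k GBu.
have [sb0|sb_gt0] := eqVneq (sqnorm (col k B)) 0.
  by apply: le_lt_trans CS _; rewrite sb0 mul0r; lra.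
have {}sb_gt0 : 0 < sqnorm (col k B) by rewrite lt_def sb_gt0 sqnorm_ge0.
have : cabs2 ((ctmx B *m w) k 0) * (4 * c) < c.
  apply: le_lt_trans (ler_wpM2r (ltW _) CS) _; first by rewrite mulr_gt0.
  rewrite -mulrA; apply: lt_le_trans (le_trans sb_sa_le d_le_c).
  by rewrite ltr_pM2l.
nra.
Qed.

End LLLDecoding.

Theorem lemma2 (R : realType) (N M : nat) (H : 'M[R[i]]_(N, M))
    (U : 'M[R[i]]_M) (x : 'cV[R[i]]_M) (w : 'cV[R[i]]_N) :
  (1 <= M)%N -> (M <= N)%N ->
  \rank H = M ->
  unimodular U ->
  LLL_reduced (pinvH H *m U) ->
  gauss_mx x ->
  vnorm w < min_col_norm (pinvH (pinvH H *m U)) /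
              (2 * Num.sqrt (M%:R * orth_defect (pinvH H *m U))) ->
  lll_decode (pinvH H *m U) U (H *m x + w) = x.
Proof.
move=> _ _ rkH [U_gauss [U_unit _]] _ x_gauss hw.
have GHu := gram_unitmx rkH.
have GBu := gram_pinvH_mul_unitmx GHu U_unit.
rewrite /lll_decode mulmxDr mulmxA ctmx_pinvH_mul //.
have -> : \col_i round_c ((ctmx U *m x + ctmx (pinvH H *m U) *m w) i 0) = ctmx U *m x.
  apply/matrixP => i j; rewrite ord1 mxE [X in round_c X]mxE round_c_gaussianD //.
    exact: gauss_mx_mul (gauss_mx_ctmx U_gauss) x_gauss i 0.
  exact: decoder_noise_lt GBu hw.
by rewrite mulKmx // ctmx_unitmx.
Qed.
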